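(* For the SG-SAV iteration with $r_0=\sqrt{f(x_0)+c}$, assume (A.3) and (A.4). Then for every $T\ge1$: (i) $r_t>0$ for all $t$, $r_{t+1}\le r_t$, and $r_t-r_{t+1}=\frac{\eta\,r_{t+1}}{2\tilde F_t^2}\|G_t\|^2$; (ii) $\mathbb{E}\big[\sum_{t=0}^{T-1}r_{t+1}\|G_t\|^2\big]\le\frac{2\sqrt{f(x_0)+c}\,B}{\eta}$; (iii) $\mathbb{E}\big[\sum_{t=0}^{T-1}\rho_t^2\|G_t\|^2\big]\le\frac{2(f(x_0)+c)B}{a\eta}$, where $\rho_t:=r_{t+1}/\tilde F_t$; (iv) $\mathbb{E}\big[\sum_{t=0}^{T-1}r_{t+1}|\langle\nabla f(x_t)-G_t,G_t\rangle|\big]\le\sqrt T\,\sigma_0\sqrt{\frac{2(f(x_0)+c)B}{\eta}}$.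
   Context: Let $f:\mathbb{R}^d\to\mathbb{R}$ be continuously differentiable and let $c\ge0$ be a constant with $f^*:=\inf_{x}f(x)>-c$. Let $\xi_0,\xi_1,\dots$ be random variables. For each $x$ and sample $\xi$, let $f(x;\xi)$ be a stochastic function value and $G(x;\xi)\in\mathbb{R}^d$ a stochastic gradient. Write $G_t:=G(x_t;\xi_t)$ and $\tilde F_t:=\sqrt{f(x_t;\xi_t)+c}$. Given $x_0$, $r_0$ and $\eta>0$, the SG-SAV iteration defines $(x_{t+1},r_{t+1})$ as the solution of $$x_{t+1}=x_t-\eta\,\frac{r_{t+1}}{\tilde F_t}\,G_t,\qquad r_{t+1}=r_t+\frac{1}{2\tilde F_t}\langle G_t,\,x_{t+1}-x_t\rangle .$$ (A.3): $\mathbb{E}_{\xi_t}\|G_t-\nabla f(x_t)\|^2\le\sigma_0^2$ for all $t$ (conditional expectation over $\xi_t$ given $\xi_0,\dots,\xi_{t-1}$). (A.4): there are $0<a\le B$ with $a\le f(x)+c\le B$ and $a\le f(x;\xi)+c\le B$ for all $x,\xi$. *)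

From HB Require Import structures.
From mathcomp Require Import all_boot all_order all_algebra.
From mathcomp Require Import all_classical all_reals all_analysis.
Set Implicit Arguments. Unset Strict Implicit. Unset Printing Implicit Defensive.
Import Order.TTheory GRing.Theory Num.Theory.
Import numFieldNormedType.Exports.
Local Open Scope classical_set_scope.
Local Open Scope ring_scope.

Definition vdot {R : realType} {d : nat} (u v : 'rV[R]_d) : R :=
  \sum_(i < d) u 0 i * v 0 i.
Definition sqnorm {R : realType} {d : nat} (u : 'rV[R]_d) : R := vdot u u.

(* sigma-algebra generated by the random variables xi_0, ..., xi_{t-1}
   (the trivial sigma-algebra {set0, setT} when t = 0). *)
Definition past_sigma {dO dX} {Omega : measurableType dO} {Xi : measurableType dX}
  (xi : nat -> Omega -> Xi) (t : nat) : set (set Omega) :=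
  <<s \bigcup_(i in [set k : nat | (k < t)%N])
        preimage_set_system setT (xi i) (@measurable _ Xi) >>.

From HB Require Import structures.
From mathcomp Require Import all_boot all_order all_algebra.
From mathcomp Require Import all_classical all_reals all_analysis.
From mathcomp Require Import ring lra measurable_realfun.
Import Order.TTheory GRing.Theory Num.Theory.
Import numFieldNormedType.Exports.
Local Open Scope classical_set_scope.
Local Open Scope ring_scope.

(* Substituting the x-update into the r-update gives
   r_t - r_{t+1} = eta r_{t+1} |G_t|^2 / (2 F_t^2), i.e. r_t = (1 + k_t) r_{t+1} with
   k_t >= 0, so r is positive and nonincreasing.  Since F_t^2 <= B, the terms
   r_{t+1} |G_t|^2 are bounded by (2B/eta)(r_t - r_{t+1}) and telescope to a bound
   (2B/eta) r_0 holding for every sample path; together with r_{t+1}/F_t^2 <= r_0/a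
   this gives (ii) and (iii).  For (iv), Young's inequality splits
   r_{t+1} |<grad f(x_t) - G_t, G_t>| into alpha |G_t - grad f(x_t)|^2, whose
   expectation is at most sigma0^2 by (A.3) on the whole space, plus a multiple of
   the path-wise bounded sum of (ii); optimizing alpha yields the sqrt T bound. *)

Section scalar_inequalities.
Context {R : realType}.

Lemma normrM_le_AMGM (p q al : R) : 0 < al ->
  `|p * q| <= al * p ^+ 2 + q ^+ 2 / (4 * al).
Proof.
move=> al_gt0; have al4_gt0 : 0 < 4 * al by rewrite mulr_gt0.
rewrite normrM -[p ^+ 2]real_normK ?num_real // -[q ^+ 2]real_normK ?num_real //.
rewrite -(ler_pM2l al4_gt0).
have -> : 4 * al * (al * `|p| ^+ 2 + `|q| ^+ 2 / (4 * al)) =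
    (2 * al * `|p|) ^+ 2 + `|q| ^+ 2 by field; rewrite gt_eqF.
have := sqr_ge0 (2 * al * `|p| - `|q|); nra.
Qed.

Lemma lee_AMGM_inf (X : \bar R) (p q : R) : 0 <= p -> 0 < q ->
  (forall al, 0 < al -> (X <= (al * p ^+ 2 + q ^+ 2 / (4 * al))%:E)%E) ->
  (X <= (p * q)%:E)%E.
Proof.
move=> p_ge0 q_gt0; have [->|p_gt0] := eqVneq p 0 => bound.
  rewrite mul0r; apply/lee_addgt0Pr => e e_gt0; rewrite add0e.
  have al_gt0 : 0 < q ^+ 2 / (4 * e) by rewrite divr_gt0 ?exprn_gt0 ?mulr_gt0.
  apply: (le_trans (bound _ al_gt0)); rewrite lee_fin le_eqVlt; apply/orP; left.
  by apply/eqP; field; rewrite !gt_eqF ?exprn_gt0.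
have p_pos : 0 < p by rewrite lt_neqAle eq_sym p_gt0.
have al_gt0 : 0 < q / (2 * p) by rewrite divr_gt0 ?mulr_gt0.
apply: (le_trans (bound _ al_gt0)); rewrite lee_fin le_eqVlt; apply/orP; left.
by apply/eqP; field; rewrite !gt_eqF.
Qed.

End scalar_inequalities.

Section vectors.
Context {R : realType} {n : nat}.
Implicit Types u v : 'rV[R]_n.

Lemma vdotZr u v k : vdot u (k *: v) = k * vdot u v.
Proof. by rewrite /vdot mulr_sumr; apply: eq_bigr => i _; rewrite mxE mulrCA. Qed.

Lemma sqnorm_ge0 u : 0 <= sqnorm u.
Proof. by apply: sumr_ge0 => i _; rewrite -expr2 sqr_ge0. Qed.

Lemma sqnormN u : sqnorm (- u) = sqnorm u.
Proof. by apply: eq_bigr => i _; rewrite mxE mulrNN. Qed.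

Lemma normr_vdot_le_AMGM u v al : 0 < al ->
  `|vdot u v| <= al * sqnorm u + sqnorm v / (4 * al).
Proof.
move=> al_gt0; rewrite /sqnorm /vdot mulr_sumr mulr_suml -big_split /=.
apply: le_trans (ler_norm_sum _ _ _) _; apply: ler_sum => i _.
by rewrite -!expr2; exact: normrM_le_AMGM.
Qed.

Lemma sav_step_dissipation (eta F r r' : R) (g y y' : 'rV[R]_n) : 0 < F ->
  y' = y - (eta * r' / F) *: g ->
  r' = r + (2 * F)^-1 * vdot g (y' - y) ->
  r - r' = eta * r' / (2 * F ^+ 2) * sqnorm g.
Proof.
move=> F_gt0 ey {1}->; rewrite ey addrAC subrr add0r -scaleNr vdotZr.
by rewrite /sqnorm; field; rewrite gt_eqF.
Qed.

End vectors.

Section dissipative_radius.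
Context {R : realType} {eta a B : R} {K S r : nat -> R}.
Hypotheses (eta_gt0 : 0 < eta) (a_gt0 : 0 < a).
Hypotheses (K_ge : forall t, a <= K t) (K_le : forall t, K t <= B).
Hypotheses (S_ge0 : forall t, 0 <= S t) (r0_gt0 : 0 < r 0%N).
Hypothesis dissipation : forall t, r t - r t.+1 = eta * r t.+1 / (2 * K t) * S t.

Let K_gt0 t : 0 < K t. Proof. exact: lt_le_trans a_gt0 (K_ge t). Qed.

Lemma radius_rate_ge0 t : 0 <= eta / (2 * K t) * S t.
Proof. by rewrite mulr_ge0 // divr_ge0 ?mulr_ge0 ?ltW. Qed.

Lemma radius_recursion t : r t = (1 + eta / (2 * K t) * S t) * r t.+1.
Proof.
apply/eqP; rewrite -subr_eq0 mulrDl mul1r opprD addrA dissipation.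
by apply/eqP; field; rewrite gt_eqF.
Qed.

Lemma radius_gt0 t : 0 < r t.
Proof.
elim: t => // t IH.
have rate_gt0 : 0 < 1 + eta / (2 * K t) * S t.
  by rewrite ltr_wpDr ?radius_rate_ge0.
by rewrite -(pmulr_rgt0 _ rate_gt0) -radius_recursion.
Qed.

Lemma radius_nonincreasing t : r t.+1 <= r t.
Proof.
rewrite [leRHS]radius_recursion mulrDl mul1r lerDl.
by rewrite mulr_ge0 ?radius_rate_ge0 ?ltW ?radius_gt0.
Qed.

Lemma radius_le_init t : r t <= r 0%N.
Proof. by elim: t => // t IH; exact: le_trans (radius_nonincreasing t) IH. Qed.

(* Each term r_{t+1} S_t equals 2 K_t / eta times the decrease r_t - r_{t+1},
   so the sum telescopes. *)
Lemma sum_radius_le T : \sum_(t < T) r t.+1 * S t <= 2 * r 0%N * B / eta.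
Proof.
have c_ge0 : 0 <= 2 * B / eta.
  by rewrite divr_ge0 ?mulr_ge0 ?ltW // (lt_le_trans (K_gt0 0)).
have step t : r t.+1 * S t <= 2 * B / eta * (r t - r t.+1).
  have -> : r t.+1 * S t = 2 * K t / eta * (r t - r t.+1).
    by rewrite dissipation; field; rewrite !gt_eqF ?K_gt0.
  rewrite ler_wpM2r ?subr_ge0 ?radius_nonincreasing //.
  by rewrite ler_wpM2r ?invr_ge0 ?(ltW eta_gt0) // ler_wpM2l.
have telescope : \sum_(t < T) (r t - r t.+1) = r 0%N - r T.
  rewrite -(big_mkord xpredT (fun t => r t - r t.+1)).
  by rewrite -opprB -telescope_sumr // -sumrN; apply: eq_bigr => t _; rewrite opprB.
apply: (@le_trans _ _ (\sum_(t < T) 2 * B / eta * (r t - r t.+1))).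
  by apply: ler_sum => t _; exact: step.
rewrite -mulr_sumr telescope.
have := mulr_ge0 c_ge0 (ltW (radius_gt0 T)).
have -> : 2 * r 0%N * B / eta = 2 * B / eta * r 0%N by ring.
lra.
Qed.

Lemma sum_radius_sq_le T :
  \sum_(t < T) r t.+1 ^+ 2 / K t * S t <= 2 * r 0%N ^+ 2 * B / (a * eta).
Proof.
have ratio_le t : r t.+1 / K t <= r 0%N / a.
  apply: ler_pM; [exact: ltW (radius_gt0 _) | by rewrite invr_ge0 ltW ?K_gt0 |
    exact: radius_le_init | by rewrite lef_pV2 ?posrE ?K_gt0].
apply: (@le_trans _ _ (\sum_(t < T) r 0%N / a * (r t.+1 * S t))).
  apply: ler_sum => t _.
  have -> : r t.+1 ^+ 2 / K t * S t = r t.+1 / K t * (r t.+1 * S t).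
    by field; rewrite gt_eqF ?K_gt0.
  by apply: ler_wpM2r => //; rewrite mulr_ge0 // ltW ?radius_gt0.
rewrite -mulr_sumr; apply: le_trans (ler_wpM2l _ (sum_radius_le T)) _.
  by rewrite divr_ge0 ?ltW.
by rewrite le_eqVlt; apply/orP; left; apply/eqP; field; rewrite !gt_eqF.
Qed.

End dissipative_radius.

Section measurability.
Context {d} {Omega : measurableType d} {R : realType}.

Definition measurable_row {n} (g : Omega -> 'rV[R]_n) :=
  forall i, measurable_fun setT (fun w => g w 0 i).

Lemma measurable_rowB {n} (g1 g2 : Omega -> 'rV[R]_n) :
  measurable_row g1 -> measurable_row g2 -> measurable_row (fun w => g1 w - g2 w).
Proof.
move=> m1 m2 i; under eq_fun do rewrite !mxE.
exact: measurable_funB.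
Qed.

Lemma measurable_vdot {n} (g1 g2 : Omega -> 'rV[R]_n) :
  measurable_row g1 -> measurable_row g2 ->
  measurable_fun setT (fun w => vdot (g1 w) (g2 w)).
Proof. by move=> m1 m2; apply: measurable_sum => i; exact: measurable_funM. Qed.

(* Above the bound [a], the inverse agrees with the continuous function
   [y |-> (max y a)^-1]. *)
Lemma measurable_funV_ge (h : Omega -> R) {a : R} : 0 < a ->
  measurable_fun setT h -> (forall w, a <= h w) ->
  measurable_fun setT (fun w => (h w)^-1).
Proof.
move=> a_gt0 mh h_ge.
have -> : (fun w => (h w)^-1) = (fun y : R => (Num.max y a)^-1) \o h.
  by apply/funext => w /=; rewrite max_l ?h_ge.
apply: measurableT_comp => //; apply: continuous_measurable_fun => y.
have max_neq0 : Num.max y a != 0.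
  by rewrite gt_eqF // (lt_le_trans a_gt0) // le_max lexx orbT.
apply: (continuousV (s := fun z : R => Num.max z a)) => //.
by apply: (@continuous_max R R id (cst a)); [exact: cvg_id | exact: cvg_cst].
Qed.

Lemma past_sigma_setT {dX} {Xi : measurableType dX} (xi : nat -> Omega -> Xi) t :
  past_sigma xi t setT.
Proof.
have [_ closedC _] := smallest_sigma_algebra setT
  (\bigcup_(i in [set k : nat | (k < t)%N]) preimage_set_system setT (xi i) measurable).
by rewrite -(setD0 setT); apply: closedC; exact: sigma_algebra0.
Qed.

End measurability.

Section expectation_bounds.
Context {d} {Omega : measurableType d} {R : realType} (P : probability Omega R).
Local Open Scope ereal_scope.

Lemma expectation_le_cst (X : Omega -> R) (M : R) : measurable_fun setT X ->
  (forall w, 0 <= X w)%R -> (forall w, X w <= M)%R -> 'E_P[X] <= M%:E.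
Proof.
move=> mX X_ge0 X_le; rewrite -(expectation_cst P M).
apply: expectation_le => //; last exact: aeW.
by move=> w; exact: le_trans (X_ge0 w) (X_le w).
Qed.

Lemma expectation_le_sum_bound (X : Omega -> R) (Z : nat -> Omega -> R)
    (T : nat) (lam s C : R) :
  (0 <= lam)%R -> (0 <= C)%R -> measurable_fun setT X ->
  (forall t, measurable_fun setT (Z t)) ->
  (forall w, 0 <= X w)%R -> (forall t w, 0 <= Z t w)%R ->
  (forall t, \int[P]_w (Z t w)%:E <= s%:E) ->
  (forall w, X w <= lam * \sum_(t < T) Z t w + C)%R ->
  'E_P[X] <= (lam * (T%:R * s) + C)%:E.
Proof.
move=> lam_ge0 C_ge0 mX mZ X_ge0 Z_ge0 intZ X_le.
have mSum : measurable_fun setT (fun w => \sum_(t < T) Z t w)%R.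
  exact: measurable_sum.
have mBound : measurable_fun setT (fun w => lam * \sum_(t < T) Z t w + C)%R.
  by apply: measurable_funD => //; exact: measurable_funM.
have bound_ge0 w : (0 <= lam * \sum_(t < T) Z t w + C)%R.
  by rewrite addr_ge0 ?mulr_ge0 ?sumr_ge0.
apply: le_trans (expectation_le mX mBound X_ge0 bound_ge0 (aeW P X_le)) _.
rewrite unlock /=.
have -> : (fun w => (lam * \sum_(t < T) Z t w + C)%:E) =
    (fun w => lam%:E * (\sum_(t < T) Z t w)%:E + C%:E).
  by apply/funext => w; rewrite EFinD EFinM.
have sum_ge0 w : 0 <= (\sum_(t < T) Z t w)%:E by rewrite lee_fin sumr_ge0.
rewrite ge0_integralD //; last 2 first.
- by move=> w _; apply: mule_ge0; [rewrite lee_fin | exact: sum_ge0].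
- by apply/measurable_EFinP; exact: measurable_funM.
rewrite ge0_integralZl_EFin //; last exact/measurable_EFinP.
under eq_integral do rewrite -sumEFin.
rewrite ge0_integral_sum //; first last.
- by move=> t w _; rewrite lee_fin.
- by move=> t; exact/measurable_EFinP.
rewrite integral_cst //= probability_setT mule1 EFinD EFinM.
rewrite leeD2r // lee_wpmul2l ?lee_fin //.
apply: (@le_trans _ _ (\sum_(t < T) s%:E)); first exact: lee_sum.
by rewrite sumEFin sumr_const card_ord mulr_natl.
Qed.

End expectation_bounds.

Section sav_expectations.
Context {d} {Omega : measurableType d} {R : realType} (P : probability Omega R) {n : nat}.
Context {eta a B r0 : R} {K r : nat -> Omega -> R} {g : nat -> Omega -> 'rV[R]_n}.
Hypotheses (eta_gt0 : 0 < eta) (a_gt0 : 0 < a) (r0_gt0 : 0 < r0).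
Hypotheses (K_ge : forall t w, a <= K t w) (K_le : forall t w, K t w <= B).
Hypothesis a_le_B : a <= B.
Hypotheses (mK : forall t, measurable_fun setT (K t)) (mg : forall t, measurable_row (g t)).
Hypothesis r0E : forall w, r 0%N w = r0.
Hypothesis dissipation : forall t w,
  r t w - r t.+1 w = eta * r t.+1 w / (2 * K t w) * sqnorm (g t w).

Let r0_gt0_at w : 0 < r 0%N w. Proof. by rewrite r0E. Qed.
Let sqnorm_g_ge0 w t : 0 <= sqnorm (g t w). Proof. exact: sqnorm_ge0. Qed.

Let radius_gt0_at t w : 0 < r t w.
Proof.
exact: (radius_gt0 eta_gt0 a_gt0 (K_ge^~ w) (sqnorm_g_ge0 w) (r0_gt0_at w)
  (dissipation^~ w)).
Qed.

Let sum_radius_le_at T w : \sum_(t < T) r t.+1 w * sqnorm (g t w) <= 2 * r0 * B / eta.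
Proof.
rewrite -(r0E w); exact: (sum_radius_le eta_gt0 a_gt0 (K_ge^~ w) (K_le^~ w)
  (sqnorm_g_ge0 w) (r0_gt0_at w) (dissipation^~ w)).
Qed.

Lemma measurable_radius t : measurable_fun setT (r t).
Proof.
elim: t => [|t IH].
  by rewrite (_ : r 0%N = cst r0); [exact: measurable_cst | apply/funext].
have rate_ge w : 1 <= 1 + eta / (2 * K t w) * sqnorm (g t w).
  by rewrite lerDl (radius_rate_ge0 eta_gt0 a_gt0 (K_ge^~ w) (sqnorm_g_ge0 w)).
have -> : r t.+1 = (fun w => r t w * (1 + eta / (2 * K t w) * sqnorm (g t w))^-1).
  apply/funext => w; rewrite (radius_recursion a_gt0 (K_ge^~ w) (dissipation^~ w) t).
  by rewrite mulrAC mulfV ?mul1r // gt_eqF // (lt_le_trans ltr01 (rate_ge w)).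
apply: measurable_funM => //.
apply: (measurable_funV_ge (fun w => 1 + eta / (2 * K t w) * sqnorm (g t w))
  ltr01 _ rate_ge).
apply: measurable_funD => //; apply: measurable_funM; last exact: measurable_vdot.
apply: measurable_funM => //.
apply: (measurable_funV_ge (fun w => 2 * K t w) (_ : 0 < 2 * a)).
- by rewrite mulr_gt0.
- exact: measurable_funM.
- by move=> w; rewrite ler_wpM2l.
Qed.

Lemma expectation_sum_radius_le T :
  ('E_P[fun w => (\sum_(t < T) r t.+1 w * sqnorm (g t w))%R]
    <= (2 * r0 * B / eta)%:E)%E.
Proof.
apply: expectation_le_cst; last exact: sum_radius_le_at.
- apply: measurable_sum => t; apply: measurable_funM; first exact: measurable_radius.
  exact: measurable_vdot.
- by move=> w; apply: sumr_ge0 => t _; rewrite mulr_ge0 // ltW.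
Qed.

Let sum_radius_sq_le_at T w :
  \sum_(t < T) r t.+1 w ^+ 2 / K t w * sqnorm (g t w) <= 2 * r0 ^+ 2 * B / (a * eta).
Proof.
rewrite -(r0E w); exact: (sum_radius_sq_le eta_gt0 a_gt0 (K_ge^~ w) (K_le^~ w)
  (sqnorm_g_ge0 w) (r0_gt0_at w) (dissipation^~ w)).
Qed.

Lemma expectation_sum_radius_sq_le T :
  ('E_P[fun w => (\sum_(t < T) r t.+1 w ^+ 2 / K t w * sqnorm (g t w))%R]
    <= (2 * r0 ^+ 2 * B / (a * eta))%:E)%E.
Proof.
have K_gt0 t w : 0 < K t w by exact: lt_le_trans a_gt0 (K_ge t w).
apply: expectation_le_cst; last exact: sum_radius_sq_le_at.
- apply: measurable_sum => t; apply: measurable_funM; last exact: measurable_vdot.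
  apply: measurable_funM; first exact/measurable_funX/measurable_radius.
  exact: (measurable_funV_ge (K t) a_gt0 (mK t) (K_ge t)).
- move=> w; apply: sumr_ge0 => t _.
  rewrite mulr_ge0 ?sqnorm_ge0 // mulr_ge0 ?sqr_ge0 // invr_ge0.
  exact: ltW (K_gt0 t w).
Qed.

(* Young's inequality with weight [al / r0]: since [r_{t+1} <= r0] the first part
   becomes [al * |e_t|^2] and the second a multiple of [r_{t+1} |g_t|^2]. *)
Lemma sum_radius_vdot_le (e : nat -> Omega -> 'rV[R]_n) T w al : 0 < al ->
  \sum_(t < T) r t.+1 w * `|vdot (e t w) (g t w)|
    <= al * \sum_(t < T) sqnorm (e t w) + 2 * r0 ^+ 2 * B / eta / (4 * al).
Proof.
move=> al_gt0; have be_gt0 : 0 < al / r0 by rewrite divr_gt0.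
have term t : r t.+1 w * `|vdot (e t w) (g t w)|
    <= al * sqnorm (e t w) + r0 / (4 * al) * (r t.+1 w * sqnorm (g t w)).
  have r_gt0 := radius_gt0_at t.+1 w.
  apply: le_trans (ler_wpM2l (ltW r_gt0) (normr_vdot_le_AMGM _ _ _ be_gt0)) _.
  have -> : r t.+1 w * (al / r0 * sqnorm (e t w) + sqnorm (g t w) / (4 * (al / r0)))
      = r t.+1 w / r0 * (al * sqnorm (e t w))
        + r0 / (4 * al) * (r t.+1 w * sqnorm (g t w)).
    by field; rewrite !gt_eqF.
  rewrite lerD2r ler_piMl ?mulr_ge0 ?sqnorm_ge0 ?(ltW al_gt0) //.
  rewrite ler_pdivrMr // mul1r -(r0E w).
  exact: (radius_le_init eta_gt0 a_gt0 (K_ge^~ w) (sqnorm_g_ge0 w) (r0_gt0_at w)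
    (dissipation^~ w)).
apply: (@le_trans _ _ (\sum_(t < T)
    (al * sqnorm (e t w) + r0 / (4 * al) * (r t.+1 w * sqnorm (g t w))))).
  by apply: ler_sum => t _; exact: term.
rewrite big_split /= -!mulr_sumr lerD2l.
apply: le_trans (ler_wpM2l _ (sum_radius_le_at T w)) _.
  by rewrite divr_ge0 ?mulr_ge0 ?ltW.
by rewrite le_eqVlt; apply/orP; left; apply/eqP; field; rewrite !gt_eqF.
Qed.

Lemma expectation_sum_radius_vdot_le (e : nat -> Omega -> 'rV[R]_n) (sigma : R) T :
  0 <= sigma -> (forall t, measurable_row (e t)) ->
  (forall t, (\int[P]_w (sqnorm (e t w))%:E <= (sigma ^+ 2)%:E)%E) ->
  ('E_P[fun w => (\sum_(t < T) r t.+1 w * `|vdot (e t w) (g t w)|)%R]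
    <= (Num.sqrt T%:R * sigma * Num.sqrt (2 * r0 ^+ 2 * B / eta))%:E)%E.
Proof.
move=> sigma_ge0 me int_e.
have bound_gt0 : 0 < 2 * r0 ^+ 2 * B / eta.
  by rewrite !mulr_gt0 ?exprn_gt0 ?invr_gt0 // (lt_le_trans a_gt0).
apply: lee_AMGM_inf => [||al al_gt0]; first by rewrite mulr_ge0 ?sqrtr_ge0.
  by rewrite sqrtr_gt0.
rewrite exprMn !sqr_sqrtr ?ler0n ?(ltW bound_gt0) //.
apply: (expectation_le_sum_bound P _ (fun t w => sqnorm (e t w))) => //.
- exact: ltW al_gt0.
- by apply: divr_ge0; [exact: ltW bound_gt0 | rewrite mulr_ge0 // ltW].
- apply: measurable_sum => t; apply: measurable_funM; first exact: measurable_radius.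
  exact/measurableT_comp/measurable_vdot.
- by move=> t; exact: measurable_vdot.
- by move=> w; apply: sumr_ge0 => t _; rewrite mulr_ge0 // ltW.
- by move=> t w; exact: sqnorm_ge0.
- by move=> w; exact: sum_radius_vdot_le.
Qed.

End sav_expectations.

Theorem mainTheorem6
  (R : realType) (d : nat)
  (* objective f, its gradient, and the constant c *)
  (f : 'rV[R]_d -> R) (gradf : 'rV[R]_d -> 'rV[R]_d) (c : R)
  (Hf_diff : forall x, differentiable f x)
  (Hf_grad : forall x h, 'd f x h = vdot (gradf x) h)
  (Hgrad_cont : continuous gradf)
  (Hc : 0 <= c)
  (Hinf : exists m : R, - c < m /\ forall x, m <= f x)
  (* probability space and samples *)
  (dO dX : measure_display) (Omega : measurableType dO) (Xi : measurableType dX)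
  (P : probability Omega R)
  (xi : nat -> Omega -> Xi) (Hxi_meas : forall t, measurable_fun setT (xi t))
  (* stochastic function values and stochastic gradients *)
  (fs : 'rV[R]_d -> Xi -> R) (G : 'rV[R]_d -> Xi -> 'rV[R]_d)
  (* SG-SAV iterates *)
  (x0 : 'rV[R]_d) (eta : R) (Heta : 0 < eta)
  (x : nat -> Omega -> 'rV[R]_d) (r : nat -> Omega -> R)
  (Hx0 : forall w, x 0%N w = x0)
  (Hr0 : forall w, r 0%N w = Num.sqrt (f x0 + c))
  (Hx_step : forall t w,
     x t.+1 w = x t w - (eta * r t.+1 w / Num.sqrt (fs (x t w) (xi t w) + c))
                          *: G (x t w) (xi t w))
  (Hr_step : forall t w,
     r t.+1 w = r t w + (2 * Num.sqrt (fs (x t w) (xi t w) + c))^-1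
                          * vdot (G (x t w) (xi t w)) (x t.+1 w - x t w))
  (* the quantities G_t, grad f(x_t), f(x_t; xi_t) are random variables *)
  (HG_meas : forall t (i : 'I_d),
     measurable_fun setT (fun w => G (x t w) (xi t w) 0 i))
  (Hgrad_meas : forall t (i : 'I_d),
     measurable_fun setT (fun w => gradf (x t w) 0 i))
  (Hfs_meas : forall t, measurable_fun setT (fun w => fs (x t w) (xi t w)))
  (* (A.3): E_{xi_t} || G_t - grad f(x_t) ||^2 <= sigma0^2, i.e. the
     conditional expectation given xi_0..xi_{t-1} is a.s. bounded by sigma0^2 *)
  (sigma0 : R) (Hsigma0 : 0 <= sigma0)
  (HA3 : forall t (A : set Omega), past_sigma xi t A ->
     (\int[P]_(w in A) (sqnorm (G (x t w) (xi t w) - gradf (x t w)))%:E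
        <= (sigma0 ^+ 2)%:E * P A)%E)
  (* (A.4) *)
  (a B : R) (Ha : 0 < a) (HaB : a <= B)
  (HA4f : forall y, a <= f y + c <= B)
  (HA4fs : forall y s, a <= fs y s + c <= B)
  (T : nat) (HT : (1 <= T)%N) :
  let Ft := fun t w => Num.sqrt (fs (x t w) (xi t w) + c) in
  let Gt := fun t w => G (x t w) (xi t w) in
  (* (i) *)
  (forall t w, 0 < r t w /\ r t.+1 w <= r t w /\
     r t w - r t.+1 w = eta * r t.+1 w / (2 * Ft t w ^+ 2) * sqnorm (Gt t w)) /\
  (* (ii) *)
  ('E_P[fun w => (\sum_(t < T) r t.+1 w * sqnorm (Gt t w))%R]
     <= (2 * Num.sqrt (f x0 + c) * B / eta)%:E)%E /\
  (* (iii) with rho_t := r_{t+1} / Ft_t *)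
  ('E_P[fun w => (\sum_(t < T) (r t.+1 w / Ft t w) ^+ 2 * sqnorm (Gt t w))%R]
     <= (2 * (f x0 + c) * B / (a * eta))%:E)%E /\
  (* (iv) *)
  ('E_P[fun w => (\sum_(t < T)
          r t.+1 w * `| vdot (gradf (x t w) - Gt t w) (Gt t w) |)%R]
     <= (Num.sqrt T%:R * sigma0 * Num.sqrt (2 * (f x0 + c) * B / eta))%:E)%E.
Proof.
move=> Ft Gt; pose K t w := fs (x t w) (xi t w) + c.
have K_ge t w : a <= K t w by case/andP: (HA4fs (x t w) (xi t w)) => +.
have K_le t w : K t w <= B by case/andP: (HA4fs (x t w) (xi t w)) => _.
have FtK t w : Ft t w ^+ 2 = K t w by rewrite sqr_sqrtr // (le_trans (ltW Ha) (K_ge t w)).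
have mK t : measurable_fun setT (K t) by exact: measurable_funD.
have fc_gt0 : 0 < f x0 + c by case/andP: (HA4f x0) => /(lt_le_trans Ha).
have r0sq : Num.sqrt (f x0 + c) ^+ 2 = f x0 + c by rewrite sqr_sqrtr // ltW.
set r0 := Num.sqrt (f x0 + c) in Hr0 r0sq *.
have r0_gt0 : 0 < r0 by rewrite sqrtr_gt0.
have dissipation t w :
    r t w - r t.+1 w = eta * r t.+1 w / (2 * K t w) * sqnorm (Gt t w).
  rewrite -FtK; apply: sav_step_dissipation (Hx_step t w) (Hr_step t w).
  by rewrite sqrtr_gt0 (lt_le_trans Ha (K_ge t w)).
have r0_gt0_at w : 0 < r 0%N w by rewrite Hr0.
split.
  move=> t w; split; last split; last by rewrite FtK dissipation.
  - exact: (radius_gt0 Heta Ha (K_ge^~ w) (fun t => sqnorm_ge0 (Gt t w))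
      (r0_gt0_at w) (dissipation^~ w)).
  - exact: (radius_nonincreasing Heta Ha (K_ge^~ w) (fun t => sqnorm_ge0 (Gt t w))
      (r0_gt0_at w) (dissipation^~ w)).
split; first exact: (expectation_sum_radius_le P Heta Ha r0_gt0 K_ge K_le mK HG_meas
  Hr0 dissipation).
split.
  have -> : (fun w => \sum_(t < T) (r t.+1 w / Ft t w) ^+ 2 * sqnorm (Gt t w)) =
      (fun w => \sum_(t < T) r t.+1 w ^+ 2 / K t w * sqnorm (Gt t w)).
    by apply/funext => w; apply: eq_bigr => t _; rewrite expr_div_n FtK.
  rewrite -r0sq; exact: (expectation_sum_radius_sq_le P Heta Ha r0_gt0 K_ge K_le mK
    HG_meas Hr0 dissipation).
rewrite -r0sq; apply: (expectation_sum_radius_vdot_le P Heta Ha r0_gt0 K_ge K_le HaB mK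
  HG_meas Hr0 dissipation (fun t w => gradf (x t w) - Gt t w) sigma0 T Hsigma0) => t.
- exact: (measurable_rowB _ _ (Hgrad_meas t) (HG_meas t)).
- have := HA3 t setT (past_sigma_setT xi t).
  by rewrite probability_setT mule1; under eq_integral do rewrite -sqnormN opprB.
Qed.
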